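(* A dual-convex $m\times n$ net in $I^3$ is flexible in $I^3$ if and only if it has a nontrivial isotropic isometric deformation consisting of $m\times n$ nets that are v-parallel to it.
   Context: $I^3$ is $\mathbb{R}^3$ with coordinates $(x,y,z)$; isotropic = parallel to the $z$-axis; top view $\overline P$ of $P=(x,y,z)$ is $(x,y)$. Isotropic congruences: maps $\mathbf{x}\mapsto A\mathbf{x}+\mathbf{b}$, $A=\begin{pmatrix}\cos\phi&-\sin\phi&0\\ \sin\phi&\cos\phi&0\\ c_1&c_2&1\end{pmatrix}$. Metric duality: point $P=(P^1,P^2,P^3)\leftrightarrow$ plane $P^*\colon z=P^1x+P^2y-P^3$. An $m\times n$ net: points $F_{ij}$, $0\le i\le m,0\le j\le n$, with $F_{ij},F_{i+1,j},F_{i+1,j+1},F_{i,j+1}$ consecutive vertices of a convex planar quadrilateral (face $p_{ij}$) for all $0\le i<m,0\le j<n$. Boundary vertices: $i\in\{0,m\}$ or $j\in\{0,n\}$; consecutive faces around non-boundary $F_{ij}$: $p_{i-1,j-1},p_{i,j-1},p_{ij},p_{i-1,j}$. Convex 4-hedral angle with vertex $O$: union of rays from $O$ meeting a convex quadrilateral in a plane not through $O$; flat angles: rays through one side; admissible: isotropic line through $O$ meets its interior. Dual-convex: $m,n\ge2$ and at each non-boundary vertex the four consecutive face planes are planes of four consecutive flat angles of an admissible convex 4-hedral angle. Two nets are v-parallel if vertices with equal indices have equal top views. Curvature at non-boundary vertex with consecutive faces $p_1..p_4$: $\Omega=\frac12\sum_{k=1}^4\det(\overline{p_k^*},\overline{p_{k+1}^*})$,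 $p_5=p_1$. An isotropic isometric deformation of a dual-convex net $F_{ij}$ is a continuous family of $m\times n$ nets $F_{ij}(t)$, $t\in[0,1]$, $F_{ij}(0)=F_{ij}$, with corresponding faces isotropically congruent and equal curvatures at corresponding non-boundary vertices; trivial if for each $t$ there is an isotropic congruence $C_t$ with $F_{ij}(t)=C_t(F_{ij})$ for all $i,j$. Flexible in $I^3$: has a nontrivial isotropic isometric deformation. *)

From HB Require Import structures.
From mathcomp Require Import all_boot all_order all_algebra.
From mathcomp Require Import all_classical all_reals all_analysis.
Set Implicit Arguments. Unset Strict Implicit. Unset Printing Implicit Defensive.
Import Order.TTheory GRing.Theory Num.Theory numFieldNormedType.Exports.
Local Open Scope ring_scope.
Local Open Scope classical_set_scope.

Section IsotropicNets.
Variable R : realType.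

(** Points of I^3 = R^3 with coordinates (x,y,z); the z-axis is isotropic. *)
Record pt := Pt { px : R; py : R; pz : R }.

Definition psub (p q : pt) : pt := Pt (px p - px q) (py p - py q) (pz p - pz q).
Definition pscale (a : R) (p : pt) : pt := Pt (a * px p) (a * py p) (a * pz p).
Definition dot (p q : pt) : R := px p * px q + py p * py q + pz p * pz q.
Definition cross (u v : pt) : pt :=
  Pt (py u * pz v - pz u * py v) (pz u * px v - px u * pz v) (px u * py v - py u * px v).

(** P1,P2,P3,P4 are consecutive vertices of a (non-degenerate) convex planar
    quadrilateral: all turning vectors e_k x e_(k+1) of consecutive edges are
    nonzero positive multiples of one and the same vector (this forces the
    four points to be coplanar and the quadrilateral to be strictly convex). *)
Definition convex_quad (P1 P2 P3 P4 : pt) : Prop :=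
  let e1 := psub P2 P1 in let e2 := psub P3 P2 in
  let e3 := psub P4 P3 in let e4 := psub P1 P4 in
  let N := cross e1 e2 in
  N <> Pt 0 0 0 /\
  exists l2 l3 l4 : R, 0 < l2 /\ 0 < l3 /\ 0 < l4 /\
    cross e2 e3 = pscale l2 N /\ cross e3 e4 = pscale l3 N /\
    cross e4 e1 = pscale l4 N.

Definition in_plane3 (A B C X : pt) : Prop :=
  dot (cross (psub B A) (psub C A)) (psub X A) = 0.

(** A net: vertices F i j, used for 0 <= i <= m, 0 <= j <= n. *)
Definition net := nat -> nat -> pt.

Definition is_net (m n : nat) (F : net) : Prop :=
  forall i j, (i < m)%N -> (j < n)%N ->
    convex_quad (F i j) (F i.+1 j) (F i.+1 j.+1) (F i j.+1).

Definition nonboundary (m n i j : nat) : Prop :=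
  (0 < i)%N /\ (i < m)%N /\ (0 < j)%N /\ (j < n)%N.

Definition face_plane (F : net) (i j : nat) (X : pt) : Prop :=
  in_plane3 (F i j) (F i.+1 j) (F i.+1 j.+1) X.

(** The metric dual point p^* of the (non-isotropic) plane of face p_ij:
    the plane is z = a x + b y - c and p^* = (a, b, c). *)
Definition face_dual (F : net) (i j : nat) : pt :=
  let P := F i j in
  let N := cross (psub (F i.+1 j) P) (psub (F i.+1 j.+1) P) in
  Pt (- px N / pz N) (- py N / pz N) (- dot N P / pz N).

Definition det_top (p q : pt) : R := px p * py q - py p * px q.

Definition curvature (F : net) (i j : nat) : R :=
  let d1 := face_dual F i.-1 j.-1 in let d2 := face_dual F i j.-1 in
  let d3 := face_dual F i j in let d4 := face_dual F i.-1 j in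
  2^-1 * (det_top d1 d2 + det_top d2 d3 + det_top d3 d4 + det_top d4 d1).

(** Convex 4-hedral angle with vertex O over the convex quadrilateral
    Q1Q2Q3Q4 (in a plane not through O) is admissible: the isotropic line
    through O meets its interior, i.e. some point O + s e_z, s <> 0, equals
    O + lam (X - O) with lam > 0 and X in the interior of the quadrilateral
    (X a convex combination of Q1..Q4 with strictly positive weights). *)
Definition admissible_angle (O Q1 Q2 Q3 Q4 : pt) : Prop :=
  convex_quad Q1 Q2 Q3 Q4 /\ ~ in_plane3 Q1 Q2 Q3 O /\
  exists s lam w1 w2 w3 w4 : R,
    s != 0 /\ 0 < lam /\ 0 < w1 /\ 0 < w2 /\ 0 < w3 /\ 0 < w4 /\
    w1 + w2 + w3 + w4 = 1 /\
    let X := Pt (w1 * px Q1 + w2 * px Q2 + w3 * px Q3 + w4 * px Q4)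
                (w1 * py Q1 + w2 * py Q2 + w3 * py Q3 + w4 * py Q4)
                (w1 * pz Q1 + w2 * pz Q2 + w3 * pz Q3 + w4 * pz Q4) in
    Pt (px O) (py O) (pz O + s) =
    Pt (px O + lam * (px X - px O)) (py O + lam * (py X - py O))
       (pz O + lam * (pz X - pz O)).

(** Dual-convex m x n net. The flat angles of the 4-hedral angle are the
    cones over the sides Q1Q2, Q2Q3, Q3Q4, Q4Q1; their planes are the planes
    through O and the side. *)
Definition dual_convex (m n : nat) (F : net) : Prop :=
  is_net m n F /\ (2 <= m)%N /\ (2 <= n)%N /\
  forall i j, nonboundary m n i j ->
    exists Q1 Q2 Q3 Q4 : pt,
      admissible_angle (F i j) Q1 Q2 Q3 Q4 /\
      (forall X, face_plane F i.-1 j.-1 X <-> in_plane3 (F i j) Q1 Q2 X) /\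
      (forall X, face_plane F i j.-1 X <-> in_plane3 (F i j) Q2 Q3 X) /\
      (forall X, face_plane F i j X <-> in_plane3 (F i j) Q3 Q4 X) /\
      (forall X, face_plane F i.-1 j X <-> in_plane3 (F i j) Q4 Q1 X).

Definition cong_map (phi c1 c2 b1 b2 b3 : R) (p : pt) : pt :=
  Pt (cos phi * px p - sin phi * py p + b1)
     (sin phi * px p + cos phi * py p + b2)
     (c1 * px p + c2 * py p + pz p + b3).

Definition is_iso_cong (f : pt -> pt) : Prop :=
  exists phi c1 c2 b1 b2 b3 : R, forall p, f p = cong_map phi c1 c2 b1 b2 b3 p.

Definition faces_congruent (F G : net) (i j : nat) : Prop :=
  exists f, is_iso_cong f /\
    f (F i j) = G i j /\ f (F i.+1 j) = G i.+1 j /\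
    f (F i.+1 j.+1) = G i.+1 j.+1 /\ f (F i j.+1) = G i j.+1.

Definition unit_int : set R := [set t | 0 <= t <= 1].

Definition iso_isometric_deformation (m n : nat) (F : net) (Ft : R -> net) : Prop :=
  (forall i j, (i <= m)%N -> (j <= n)%N -> Ft 0 i j = F i j) /\
  (forall i j, (i <= m)%N -> (j <= n)%N ->
     {within unit_int, continuous (fun t => px (Ft t i j))} /\
     {within unit_int, continuous (fun t => py (Ft t i j))} /\
     {within unit_int, continuous (fun t => pz (Ft t i j))}) /\
  (forall t, 0 <= t <= 1 ->
     is_net m n (Ft t) /\
     (forall i j, (i < m)%N -> (j < n)%N -> faces_congruent F (Ft t) i j) /\
     (forall i j, nonboundary m n i j -> curvature (Ft t) i j = curvature F i j)).

Definition trivial_deformation (m n : nat) (F : net) (Ft : R -> net) : Prop :=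
  forall t, 0 <= t <= 1 ->
    exists f, is_iso_cong f /\
      forall i j, (i <= m)%N -> (j <= n)%N -> Ft t i j = f (F i j).

Definition flexible (m n : nat) (F : net) : Prop :=
  exists Ft, iso_isometric_deformation m n F Ft /\ ~ trivial_deformation m n F Ft.

Definition v_parallel (m n : nat) (F G : net) : Prop :=
  forall i j, (i <= m)%N -> (j <= n)%N ->
    px (G i j) = px (F i j) /\ py (G i j) = py (F i j).

End IsotropicNets.

From mathcomp Require Import all_boot all_order all_algebra.
From mathcomp Require Import all_classical all_reals all_analysis.
From mathcomp Require Import ring lra zify.
Set Implicit Arguments. Unset Strict Implicit. Unset Printing Implicit Defensive.
Import Order.TTheory GRing.Theory Num.Theory numFieldNormedType.Exports.
Local Open Scope ring_scope.

(* An isotropic congruence acts on top views as a planar motion and adds an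
   affine function to heights.  Given an isotropic isometric deformation F(t),
   let G(t) have the top view of F and the heights of F(t).  Each face of G(t)
   is the image of the face of F under the height part alone (a shear), so the
   faces stay convex and congruent.  Dual-convexity makes every face plane
   non-vertical, so adjacent faces share an edge with a non-degenerate top
   view; hence the planar parts of all face congruences F -> F(t) coincide and
   F(t) is a single planar motion of G(t).  A planar motion rotates the top
   views of the dual points, so curvatures agree, and a congruence F -> G(t)
   composes with it to a congruence F -> F(t), so G(t) is nontrivial whenever
   F(t) is. *)

Section IsotropicGeometry.
Variable R : realType.
Implicit Types (A B C D O P Q X N : pt R) (F G H : net R).

Definition top_view P : R * R := (px P, py P).

Definition nonvertical A B C : Prop := pz (cross (psub B A) (psub C A)) != 0.

Definition shear (c1 c2 b3 : R) P : pt R :=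
  Pt (px P) (py P) (c1 * px P + c2 * py P + pz P + b3).

Definition top_motion (c s b1 b2 : R) P : pt R :=
  Pt (c * px P - s * py P + b1) (s * px P + c * py P + b2) (pz P).

Lemma pscaleK l N : l != 0 -> pscale (l^-1) (pscale l N) = N.
Proof. by move=> l0; case: N => x y z; rewrite /pscale /=; congr Pt; field. Qed.

Lemma pscale_divK x l N : l != 0 -> pscale (x / l) (pscale l N) = pscale x N.
Proof. by move=> l0; case: N => ? ? ?; rewrite /pscale /=; congr Pt; field. Qed.

Lemma pscale_eq0 l N : l != 0 -> pscale l N = Pt 0 0 0 -> N = Pt 0 0 0.
Proof. by move=> l0 /(congr1 (pscale l^-1)); rewrite pscaleK // /pscale /= !mulr0. Qed.

Lemma convex_quad_rot Q1 Q2 Q3 Q4 :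
  convex_quad Q1 Q2 Q3 Q4 -> convex_quad Q2 Q3 Q4 Q1.
Proof.
move=> [N0 [l2 [l3 [l4 [l2_gt0 [l3_gt0 [l4_gt0 [e23 [e34 e41]]]]]]]]] /=.
have l2_neq0 : l2 != 0 by rewrite gt_eqF.
split; first by rewrite e23 => /(pscale_eq0 l2_neq0).
exists (l3 / l2), (l4 / l2), (1 / l2).
rewrite e23 e34 e41 !pscale_divK // !divr_gt0 //; split=> //.
by case: (cross _ _) => ? ? ?; rewrite /pscale /= !mul1r.
Qed.

Lemma admissible_angle_rot O Q1 Q2 Q3 Q4 :
  admissible_angle O Q1 Q2 Q3 Q4 -> admissible_angle O Q2 Q3 Q4 Q1.
Proof.
move=> [cq [off [s [lam [w1 [w2 [w3 [w4 [s0 [lam_gt0 [w1_gt0 [w2_gt0 [w3_gt0 [w4_gt0 [ws hX]]]]]]]]]]]]]]].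
split; first exact: convex_quad_rot.
split.
  have [_ [l2 [_ [_ [l2_gt0 [_ [_ [e23 _]]]]]]]] := cq.
  have plane_rot : dot (cross (psub Q3 Q2) (psub Q4 Q2)) (psub O Q2)
                   = l2 * dot (cross (psub Q2 Q1) (psub Q3 Q1)) (psub O Q1).
    transitivity (dot (cross (psub Q3 Q2) (psub Q4 Q3)) (psub O Q2)).
      by rewrite /dot /cross /psub /=; ring.
    by rewrite e23 /dot /cross /psub /pscale /=; ring.
  rewrite /in_plane3 plane_rot => /eqP; rewrite mulf_eq0 gt_eqF //= => /eqP.
  exact: off.
exists s, lam, w2, w3, w4, w1; do 6 split=> //; split; first by lra.
by move: hX => /= -[hx hy hz]; congr Pt; lra.
Qed.

Lemma isotropic_line_dot O X s lam M :
  Pt (px O) (py O) (pz O + s) =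
    Pt (px O + lam * (px X - px O)) (py O + lam * (py X - py O))
       (pz O + lam * (pz X - pz O)) ->
  pz M * s = lam * dot M (psub X O).
Proof.
case=> hx hy hz.
have ex : lam * (px X - px O) = 0 by lra.
have ey : lam * (py X - py O) = 0 by lra.
have -> : s = lam * (pz X - pz O) by lra.
transitivity (px M * (lam * (px X - px O)) + py M * (lam * (py X - py O))
              + pz M * (lam * (pz X - pz O))); first by rewrite ex ey; ring.
by rewrite /dot /psub /=; ring.
Qed.

Lemma dot_psub_affine M O Q1 Q2 Q3 Q4 (w1 w2 w3 w4 : R) :
  w1 + w2 + w3 + w4 = 1 ->
  dot M (psub (Pt (w1 * px Q1 + w2 * px Q2 + w3 * px Q3 + w4 * px Q4)
                  (w1 * py Q1 + w2 * py Q2 + w3 * py Q3 + w4 * py Q4)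
                  (w1 * pz Q1 + w2 * pz Q2 + w3 * pz Q3 + w4 * pz Q4)) O) =
  w1 * dot M (psub Q1 O) + w2 * dot M (psub Q2 O) +
  w3 * dot M (psub Q3 O) + w4 * dot M (psub Q4 O).
Proof.
move=> ws; have -> : w1 = 1 - w2 - w3 - w4 by lra.
by rewrite /dot /psub /=; ring.
Qed.

Lemma admissible_angle_nonvertical12 O Q1 Q2 Q3 Q4 :
  admissible_angle O Q1 Q2 Q3 Q4 -> nonvertical O Q1 Q2.
Proof.
move=> [[_ [_ [_ [l4 [_ [_ [l4_gt0 [_ [_ e41]]]]]]]]]
  [off [s [lam [w1 [w2 [w3 [w4 [s0 [lam_gt0 [_ [_ [w3_gt0 [w4_gt0 [ws hX]]]]]]]]]]]]]]].
set N := cross (psub Q2 Q1) (psub Q3 Q2) in e41.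
set M := cross (psub Q1 O) (psub Q2 O).
set delta := dot N (psub Q1 O).
have delta_neq0 : delta != 0.
  apply/eqP => delta0; apply: off; rewrite /in_plane3 -oppr0 -delta0.
  by rewrite /delta /N /dot /cross /psub /=; ring.
have M1 : dot M (psub Q1 O) = 0 by rewrite /M /dot /cross /psub /=; ring.
have M2 : dot M (psub Q2 O) = 0 by rewrite /M /dot /cross /psub /=; ring.
have M3 : dot M (psub Q3 O) = delta.
  by rewrite /M /delta /N /dot /cross /psub /=; ring.
have M4 : dot M (psub Q4 O) = l4 * delta.
  transitivity (dot (cross (psub Q1 Q4) (psub Q2 Q1)) (psub Q1 O)).
    by rewrite /M /dot /cross /psub /=; ring.
  by rewrite e41 /delta /dot /pscale /=; ring.
(* Dotting s e_z = lam (X - O) with the normal M of the flat angle O Q1 Q2,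
   only Q3 and Q4 contribute, and with the same sign. *)
have key := isotropic_line_dot M hX.
rewrite dot_psub_affine // M1 M2 M3 M4 in key.
have : pz M * s != 0.
  rewrite key (_ : _ * _ = lam * (delta * (w3 + w4 * l4))); last by ring.
  by rewrite !mulf_neq0 // gt_eqF // addr_gt0 // mulr_gt0.
by rewrite mulf_eq0 negb_or => /andP[].
Qed.

Lemma admissible_angle_nonvertical O Q1 Q2 Q3 Q4 :
  admissible_angle O Q1 Q2 Q3 Q4 ->
  [/\ nonvertical O Q1 Q2, nonvertical O Q2 Q3, nonvertical O Q3 Q4
    & nonvertical O Q4 Q1].
Proof.
move=> a1; have a2 := admissible_angle_rot a1; have a3 := admissible_angle_rot a2.
have a4 := admissible_angle_rot a3.
by split; apply: admissible_angle_nonvertical12; [exact: a1|exact: a2|exact: a3|exact: a4].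
Qed.

Lemma nonvertical_same_plane A B C A' B' C' :
  (forall X, in_plane3 A B C X <-> in_plane3 A' B' C' X) ->
  nonvertical A' B' C' -> nonvertical A B C.
Proof.
rewrite /nonvertical /in_plane3 => same nv'; apply: contraNneq nv' => pzN.
set N := cross (psub B A) (psub C A) in pzN.
have lift X P (n : pt R) : dot n (psub (Pt (px X) (py X) (pz X + 1)) P) = dot n (psub X P) + pz n.
  by rewrite /dot /psub /=; ring.
have self (n : pt R) : dot n (psub A' A') = 0 by rewrite /dot /psub /=; ring.
have inA' : dot N (psub A' A) = 0 by apply/same; exact: self.
have lifted : dot N (psub (Pt (px A') (py A') (pz A' + 1)) A) = 0.
  by rewrite lift inA' pzN addr0.
by move/same: lifted; rewrite lift self add0r => ->.
Qed.

Lemma dual_convex_nonvertical m n F i j :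
  dual_convex m n F -> (i < m)%N -> (j < n)%N ->
  nonvertical (F i j) (F i.+1 j) (F i.+1 j.+1).
Proof.
move=> [_ [m_ge2 [n_ge2 angles]]] im jn.
pose face_nv a b := nonvertical (F a b) (F a.+1 b) (F a.+1 b.+1).
have around k l : nonboundary m n k l ->
    [/\ face_nv k.-1 l.-1, face_nv k l.-1, face_nv k l & face_nv k.-1 l].
  move=> /angles [Q1 [Q2 [Q3 [Q4 [/admissible_angle_nonvertical [nv1 nv2 nv3 nv4]]]]]].
  by move=> [p1 [p2 [p3 p4]]]; split; apply: nonvertical_same_plane; eassumption.
rewrite -/(face_nv i j); case: (ltnP i.+1 m) => ?; case: (ltnP j.+1 n) => ?.
- by case: (around i.+1 j.+1 ltac:(rewrite /nonboundary; lia)).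
- by case: (around i.+1 j ltac:(rewrite /nonboundary; lia)).
- by case: (around i j.+1 ltac:(rewrite /nonboundary; lia)).
- by case: (around i j ltac:(rewrite /nonboundary; lia)).
Qed.

Lemma convex_quad_top_views P1 P2 P3 P4 :
  convex_quad P1 P2 P3 P4 -> nonvertical P1 P2 P3 ->
  top_view P1 != top_view P2 /\ top_view P1 != top_view P4.
Proof.
move=> [_ [_ [_ [l4 [_ [_ [l4_gt0 [_ [_ e41]]]]]]]]] nv.
have e : pz (cross (psub P1 P4) (psub P2 P1)) =
         l4 * pz (cross (psub P2 P1) (psub P3 P1)).
  by rewrite e41 /cross /psub /pscale /=; ring.
split; apply: contraNneq nv; rewrite /top_view => -[ex ey].
  by rewrite /cross /psub /= ex ey; apply/eqP; ring.
have : pz (cross (psub P1 P4) (psub P2 P1)) == 0.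
  by rewrite /cross /psub /= ex ey; apply/eqP; ring.
by rewrite e mulf_eq0 gt_eqF.
Qed.

Lemma rotation_kernel (a b x y : R) :
  a * x - b * y = 0 -> b * x + a * y = 0 -> (x, y) != (0, 0) -> a = 0 /\ b = 0.
Proof.
move=> e1 e2 xy0.
have d0 : x ^+ 2 + y ^+ 2 != 0.
  by rewrite paddr_eq0 ?sqr_ge0 // !sqrf_eq0 -xpair_eqE.
have ea : a * (x ^+ 2 + y ^+ 2) = x * (a * x - b * y) + y * (b * x + a * y).
  by ring.
have eb : b * (x ^+ 2 + y ^+ 2) = x * (b * x + a * y) - y * (a * x - b * y).
  by ring.
rewrite e1 e2 !mulr0 ?addr0 ?subr0 in ea eb.
by move/eqP: ea; move/eqP: eb; rewrite !mulf_eq0 (negbTE d0) !orbF => /eqP ? /eqP.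
Qed.

Lemma top_motion_unique c s b1 b2 c' s' b1' b2' P Q :
  top_motion c s b1 b2 P = top_motion c' s' b1' b2' P ->
  top_motion c s b1 b2 Q = top_motion c' s' b1' b2' Q ->
  top_view P != top_view Q -> (c, s, b1, b2) = (c', s', b1', b2').
Proof.
case=> xP yP [xQ yQ] PQ.
have [dc ds] : c - c' = 0 /\ s - s' = 0.
  apply: (@rotation_kernel _ _ (px P - px Q) (py P - py Q)); try lra.
  by apply: contra PQ; rewrite /top_view !xpair_eqE !subr_eq0.
have [ec es] : c' = c /\ s' = s by split; lra.
by rewrite ec es in xP yP *; congr (_, _, _, _); lra.
Qed.

Definition shear_normal (c1 c2 : R) N : pt R :=
  Pt (px N - c1 * pz N) (py N - c2 * pz N) (pz N).

Lemma cross_shear c1 c2 b3 A B C D :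
  cross (psub (shear c1 c2 b3 A) (shear c1 c2 b3 B))
        (psub (shear c1 c2 b3 C) (shear c1 c2 b3 D)) =
  shear_normal c1 c2 (cross (psub A B) (psub C D)).
Proof. by rewrite /cross /psub /shear /shear_normal /=; congr Pt; ring. Qed.

Lemma convex_quad_shear c1 c2 b3 P1 P2 P3 P4 :
  convex_quad P1 P2 P3 P4 ->
  convex_quad (shear c1 c2 b3 P1) (shear c1 c2 b3 P2)
              (shear c1 c2 b3 P3) (shear c1 c2 b3 P4).
Proof.
rewrite /convex_quad /= !cross_shear.
move=> [N0 [l2 [l3 [l4 [l2_gt0 [l3_gt0 [l4_gt0 [e2 [e3 e4]]]]]]]]].
have scale l N : shear_normal c1 c2 (pscale l N) = pscale l (shear_normal c1 c2 N).
  by rewrite /shear_normal /pscale /=; congr Pt; ring.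
split; last by exists l2, l3, l4; rewrite e2 e3 e4 !scale.
case: (cross _ _) N0 => x y z; rewrite /shear_normal /= => + [ex ey ez].
by rewrite ez !mulr0 !subr0 in ex ey *; rewrite ex ey.
Qed.

Lemma cross_top_motion c s b1 b2 A B C D :
  c ^+ 2 + s ^+ 2 = 1 ->
  cross (psub (top_motion c s b1 b2 A) (top_motion c s b1 b2 B))
        (psub (top_motion c s b1 b2 C) (top_motion c s b1 b2 D)) =
  top_motion c s 0 0 (cross (psub A B) (psub C D)).
Proof.
move=> cs; rewrite /cross /psub /top_motion /=; congr Pt; try ring.
by rewrite -[RHS]mul1r -cs; ring.
Qed.

Lemma face_dual_top_motion c s b1 b2 K H i j :
  c ^+ 2 + s ^+ 2 = 1 ->
  K i j = top_motion c s b1 b2 (H i j) ->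
  K i.+1 j = top_motion c s b1 b2 (H i.+1 j) ->
  K i.+1 j.+1 = top_motion c s b1 b2 (H i.+1 j.+1) ->
  top_view (face_dual K i j) = top_view (top_motion c s 0 0 (face_dual H i j)).
Proof.
move=> cs eij ei1j ei1j1; rewrite /face_dual eij ei1j ei1j1 cross_top_motion //.
by rewrite /top_view /=; congr (_, _); ring.
Qed.

Lemma det_top_rot c s p q p' q' :
  c ^+ 2 + s ^+ 2 = 1 ->
  top_view p' = top_view (top_motion c s 0 0 p) ->
  top_view q' = top_view (top_motion c s 0 0 q) ->
  det_top p' q' = det_top p q.
Proof.
rewrite /det_top => cs [-> ->] [-> ->] /=.
by rewrite -[RHS]mul1r -cs; ring.
Qed.

Lemma curvature_top_motion c s b1 b2 K H i j :
  c ^+ 2 + s ^+ 2 = 1 -> (0 < i)%N -> (0 < j)%N ->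
  (forall k l, (k <= i.+1)%N -> (l <= j.+1)%N ->
     K k l = top_motion c s b1 b2 (H k l)) ->
  curvature K i j = curvature H i j.
Proof.
move=> cs; case: i => // i; case: j => // j _ _ KH.
have fd a b : (a <= i.+1)%N -> (b <= j.+1)%N ->
    top_view (face_dual K a b) = top_view (top_motion c s 0 0 (face_dual H a b)).
  by move=> ai bj; apply: face_dual_top_motion => //; apply: KH; lia.
by rewrite /curvature /= !(det_top_rot cs (fd _ _ _ _) (fd _ _ _ _)) //; lia.
Qed.

Definition maps_face (f : pt R -> pt R) F G (i j : nat) : Prop :=
  f (F i j) = G i j /\ f (F i.+1 j) = G i.+1 j /\
  f (F i.+1 j.+1) = G i.+1 j.+1 /\ f (F i j.+1) = G i j.+1.

Definition with_top_view F G : net R :=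
  fun i j => Pt (px (F i j)) (py (F i j)) (pz (G i j)).

Lemma faces_congruent_cong_map F G i j :
  faces_congruent F G i j ->
  exists phi c1 c2 b1 b2 b3, maps_face (cong_map phi c1 c2 b1 b2 b3) F G i j.
Proof.
case=> f [[phi [c1 [c2 [b1 [b2 [b3 fE]]]]]] mf].
by exists phi, c1, c2, b1, b2, b3; move: mf; rewrite /maps_face !fE.
Qed.

Lemma maps_face_with_top_view phi c1 c2 b1 b2 b3 F G i j :
  maps_face (cong_map phi c1 c2 b1 b2 b3) F G i j ->
  maps_face (shear c1 c2 b3) F (with_top_view F G) i j /\
  maps_face (top_motion (cos phi) (sin phi) b1 b2) (with_top_view F G) G i j.
Proof. by rewrite /maps_face /with_top_view; case=> <- [<- [<- <-]]. Qed.

Lemma shear_is_iso_cong c1 c2 b3 : is_iso_cong (shear c1 c2 b3).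
Proof.
by exists 0, c1, c2, 0, 0, b3 => P; rewrite /cong_map cos0 sin0; congr Pt; ring.
Qed.

Lemma is_iso_cong_top_motion phi b1 b2 f :
  is_iso_cong f -> is_iso_cong (top_motion (cos phi) (sin phi) b1 b2 \o f).
Proof.
case=> psi [c1 [c2 [e1 [e2 [e3 fE]]]]].
exists (phi + psi), c1, c2, (cos phi * e1 - sin phi * e2 + b1),
  (sin phi * e1 + cos phi * e2 + b2), e3 => P.
by rewrite /= fE /cong_map /top_motion cosD sinD /=; congr Pt; ring.
Qed.

End IsotropicGeometry.

Lemma grid_connected (T : Type) (m n : nat) (Mo : nat -> nat -> T -> Prop) (p0 : T) :
  (forall p, Mo 0 0 p -> p = p0) ->
  (forall i j, (i < m)%N -> (j < n)%N -> exists p, Mo i j p) ->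
  (forall i j p q, (i.+1 < m)%N -> (j < n)%N -> Mo i j p -> Mo i.+1 j q -> p = q) ->
  (forall i j p q, (i < m)%N -> (j.+1 < n)%N -> Mo i j p -> Mo i j.+1 q -> p = q) ->
  forall i j p, (i < m)%N -> (j < n)%N -> Mo i j p -> p = p0.
Proof.
move=> M00 ex down right; elim=> [|i IHi] j p im jn Mp.
  elim: j p jn Mp => [|j IHj] p jn Mp; first exact: M00.
  have [q Mq] := ex 0%N j im (ltnW jn).
  by rewrite -(IHj q (ltnW jn) Mq); apply/esym/(right 0%N j).
have [q Mq] := ex i j (ltnW im) jn.
by rewrite -(IHi j q (ltnW im) jn Mq); apply/esym/(down i j).
Qed.

Lemma net_corners (P : nat -> nat -> Prop) m n i j :
  (0 < m)%N -> (0 < n)%N -> (i <= m)%N -> (j <= n)%N ->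
  (forall a b, (a < m)%N -> (b < n)%N ->
     [/\ P a b, P a.+1 b, P a.+1 b.+1 & P a b.+1]) ->
  P i j.
Proof.
move=> m0 n0 im jn corners.
have [a [am ia]] : exists a, (a < m)%N /\ (i = a \/ i = a.+1).
  by case: (ltnP i m) => ?; [exists i | exists m.-1]; split; lia.
have [b [bn jb]] : exists b, (b < n)%N /\ (j = b \/ j = b.+1).
  by case: (ltnP j n) => ?; [exists j | exists n.-1]; split; lia.
by case: (corners a b am bn); case: ia => ->; case: jb => ->.
Qed.

Section Rigidity.
Variables (R : realType) (m n : nat) (F G : net R).
Hypotheses (F_dual_convex : dual_convex m n F)
  (FG : forall i j, (i < m)%N -> (j < n)%N -> faces_congruent F G i j).

Let H := with_top_view F G.

Lemma face_top_motion i j : (i < m)%N -> (j < n)%N ->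
  exists phi b1 b2, maps_face (top_motion (cos phi) (sin phi) b1 b2) H G i j.
Proof.
move=> im jn; have [phi [c1 [c2 [b1 [b2 [b3 mf]]]]]] := faces_congruent_cong_map (FG im jn).
by exists phi, b1, b2; case: (maps_face_with_top_view mf).
Qed.

Lemma face_top_views i j : (i < m)%N -> (j < n)%N ->
  top_view (F i j) != top_view (F i.+1 j) /\ top_view (F i j) != top_view (F i j.+1).
Proof.
move=> im jn; apply: convex_quad_top_views; first exact: F_dual_convex.1.
exact: dual_convex_nonvertical F_dual_convex im jn.
Qed.

Lemma face_top_motions_agree : exists phi b1 b2,
  forall i j c s b1' b2', (i < m)%N -> (j < n)%N ->
    maps_face (top_motion c s b1' b2') H G i j ->
    (c, s, b1', b2') = (cos phi, sin phi, b1, b2).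
Proof.
have [_ [m_ge2 [n_ge2 _]]] := F_dual_convex.
have [phi [b1 [b2 M00]]] := face_top_motion (ltnW m_ge2) (ltnW n_ge2).
exists phi, b1, b2 => i j c s b1' b2' im jn mf.
pose Mo i j (p : R * R * R * R) :=
  let: (c, s, b1, b2) := p in maps_face (top_motion c s b1 b2) H G i j.
apply: (@grid_connected _ m n Mo _ _ _ _ _ i j (c, s, b1', b2')) => // {mf im jn i j}.
- move=> [[[c' s'] b1''] b2''] [e1 [e2 _]]; case: M00 => e1' [e2' _].
  apply: (top_motion_unique (etrans e1 (esym e1')) (etrans e2 (esym e2'))).
  exact: (face_top_views (ltnW m_ge2) (ltnW n_ge2)).1.
- move=> i j im jn; have [phi' [b1'' [b2'' mf']]] := face_top_motion im jn.
  by exists (cos phi', sin phi', b1'', b2'').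
- move=> i j [[[c1 s1] d1] d2] [[[c2 s2] d3] d4] im jn.
  move=> [_ [e2 [e3 _]]] [e1' [_ [_ e4']]].
  apply: (top_motion_unique (etrans e2 (esym e1')) (etrans e3 (esym e4'))).
  exact: (face_top_views im jn).2.
- move=> i j [[[c1 s1] d1] d2] [[[c2 s2] d3] d4] im jn.
  move=> [_ [_ [e3 e4]]] [e1' [e2' _]].
  apply: (top_motion_unique (etrans e4 (esym e1')) (etrans e3 (esym e2'))).
  exact: (face_top_views im jn).1.
Qed.

Lemma with_top_view_top_motion : exists phi b1 b2,
  forall i j, (i <= m)%N -> (j <= n)%N ->
    G i j = top_motion (cos phi) (sin phi) b1 b2 (H i j).
Proof.
have [_ [m_ge2 [n_ge2 _]]] := F_dual_convex.
have [phi [b1 [b2 agree]]] := face_top_motions_agree.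
exists phi, b1, b2 => i j im jn.
pose P i j := G i j = top_motion (cos phi) (sin phi) b1 b2 (H i j).
apply: (@net_corners P m n i j (ltnW m_ge2) (ltnW n_ge2) im jn) => {i j im jn} i j im jn.
have [phi' [b1' [b2' mf]]] := face_top_motion im jn.
rewrite /P; case: (agree _ _ _ _ _ _ im jn mf) => <- <- <- <-.
by case: mf => -> [-> [-> ->]].
Qed.

Lemma with_top_view_is_net : is_net m n H.
Proof.
move=> i j im jn; have [phi [c1 [c2 [b1 [b2 [b3 mf]]]]]] := faces_congruent_cong_map (FG im jn).
rewrite /H; case: (maps_face_with_top_view mf) => -[<- [<- [<- <-]]] _.
exact/convex_quad_shear/F_dual_convex.1.
Qed.

Lemma with_top_view_faces_congruent i j :
  (i < m)%N -> (j < n)%N -> faces_congruent F H i j.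
Proof.
move=> im jn; have [phi [c1 [c2 [b1 [b2 [b3 mf]]]]]] := faces_congruent_cong_map (FG im jn).
exists (shear c1 c2 b3); split; first exact: shear_is_iso_cong.
by case: (maps_face_with_top_view mf).
Qed.

Lemma curvature_with_top_view i j :
  nonboundary m n i j -> curvature H i j = curvature G i j.
Proof.
move=> [i0 [im [j0 jn]]]; have [phi [b1 [b2 GH]]] := with_top_view_top_motion.
by symmetry; apply: (curvature_top_motion (cos2Dsin2 phi)) => // k l ki lj; apply: GH; lia.
Qed.

Lemma with_top_view_congruent f : is_iso_cong f ->
  (forall i j, (i <= m)%N -> (j <= n)%N -> H i j = f (F i j)) ->
  exists g, is_iso_cong g /\ forall i j, (i <= m)%N -> (j <= n)%N -> G i j = g (F i j).
Proof.
move=> f_cong Hf; have [phi [b1 [b2 GH]]] := with_top_view_top_motion.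
exists (top_motion (cos phi) (sin phi) b1 b2 \o f); split.
  exact: is_iso_cong_top_motion.
by move=> i j im jn; rewrite GH // Hf.
Qed.

End Rigidity.

Section VParallelDeformation.
Variables (R : realType) (m n : nat) (F : net R) (Ft : R -> net R).
Hypotheses (F_dual_convex : dual_convex m n F)
  (Ft_deformation : iso_isometric_deformation m n F Ft).

Lemma with_top_view_deformation :
  iso_isometric_deformation m n F (fun t => with_top_view F (Ft t)).
Proof.
have [Ft0 [Ft_cont Ft_iso]] := Ft_deformation; split; [|split].
- by move=> i j im jn; rewrite /with_top_view Ft0 //; case: (F i j).
- move=> i j im jn; have [_ [_ z_cont]] := Ft_cont i j im jn.
  by split; [|split=> //]; apply: continuous_subspaceT; exact: cst_continuous.
- move=> t t01; have [_ [FG curv]] := Ft_iso t t01; split; [|split].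
  + exact: with_top_view_is_net.
  + exact: with_top_view_faces_congruent.
  + by move=> i j nb; rewrite (curvature_with_top_view F_dual_convex FG nb) curv.
Qed.

Lemma with_top_view_trivial :
  trivial_deformation m n F (fun t => with_top_view F (Ft t)) ->
  trivial_deformation m n F Ft.
Proof.
move=> triv t t01; have [f [f_cong Hf]] := triv t t01.
have [_ [FG _]] := Ft_deformation.2.2 t t01.
exact: with_top_view_congruent f_cong Hf.
Qed.

End VParallelDeformation.

Theorem lemma9 (R : realType) (m n : nat) (F : net R) :
  dual_convex m n F ->
  (flexible m n F <->
   exists Ft : R -> net R,
     iso_isometric_deformation m n F Ft /\ ~ trivial_deformation m n F Ft /\
     (forall t : R, 0 <= t <= 1 -> v_parallel m n F (Ft t))).
Proof.
move=> F_dual_convex; split; last by move=> [Ft [Ft_def [Ft_nontriv _]]]; exists Ft.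
move=> [Ft [Ft_def Ft_nontriv]]; exists (fun t => with_top_view F (Ft t)).
split; first exact: with_top_view_deformation.
split; first exact: contra_not (with_top_view_trivial F_dual_convex Ft_def) Ft_nontriv.
by move=> t _ i j _ _.
Qed.
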